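(* Let $k$ be a field of characteristic different from $2$. The morphism $\Psi_1$ induces a morphism $\mathbb{G}_m\to S_2$. For $n\geq 2$, the morphism $\Psi_n$ induces a pointed morphism \[ \Psi_n: Q_{2n-1}\longrightarrow\begin{cases} O_{2^{n-1}} & n\equiv 0 \pmod 4,\\ S_{2^{n-1}}\cong (GL_{2^{n-1}}/O_{2^{n-1}})_{\text{\'et}} & n\equiv 1\pmod 4,\\ Sp_{2^{n-1}} & n\equiv 2\pmod 4,\\ A_{2^{n-1}}\cong GL_{2^{n-1}}/Sp_{2^{n-1}} & n\equiv 3\pmod 4.\end{cases} \]
   Context: $Q_{2n-1}=\operatorname{Spec} k[x_1,\dots,x_n,y_1,\dots,y_n]/(\sum_i x_iy_i-1)$, pointed by $x=y=(1,0,\dots,0)$. For $m\ge1$, $\tau_{2m}$ is the block sum of $m$ copies of $\begin{pmatrix}0&1\\0&0\end{pmatrix}$, $\sigma_{2m}=\tau_{2m}+\tau_{2m}^t$, $\psi_{2m}=\tau_{2m}-\tau_{2m}^t$; $O_{2m}$ is the orthogonal group of $\sigma_{2m}$ and $Sp_{2m}$ the symplectic group of $\psi_{2m}$ (pointed by the identity), $S_{2m}$ is the scheme of invertible symmetric $2m\times 2m$ matrices (pointed by $\sigma_{2m}$, with $S_{2m}\cong (GL_{2m}/O_{2m})_{\text{\'et}}$ via $g\mapsto g^t\sigma_{2m}g$), $A_{2m}$ the scheme of invertible antisymmetric matrices (pointed by $\psi_{2m}$, $A_{2m}\cong GL_{2m}/Sp_{2m}$ via $g\mapsto g^t\psi_{2m}g$).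 Suslin matrices: for a commutative ring $R$ and $a=(a_1,\dots,a_n)$, $b=(b_1,\dots,b_n)\in R^n$, $\alpha_1(a,b)=a_1$ and for $n\ge2$, $\alpha_n(a,b)=\begin{pmatrix}a_1\mathrm{Id}_{2^{n-2}}&\alpha_{n-1}(a',b')\\-\alpha_{n-1}(b',a')^t&b_1\mathrm{Id}_{2^{n-2}}\end{pmatrix}$ where $a'=(a_2,\dots,a_n)$, $b'=(b_2,\dots,b_n)$. Let $I_1=1$, $I_n=\begin{pmatrix}0&I_{n-1}\\-I_{n-1}&0\end{pmatrix}$ for $n$ even, $I_n=\begin{pmatrix}I_{n-1}&0\\0&-I_{n-1}\end{pmatrix}$ for $n\ge 3$ odd. Define $E_n\in M_{2^{n-1}}(\mathbb{Z})$ by $E_1=E_2=\mathrm{Id}$ and for $n\ge3$ (block matrices with blocks of size $2^{n-2}$, $1$ an identity block): if $n\equiv0\ (4)$: $E_n=\begin{pmatrix}1&0\\0&I_{n-1}^t\end{pmatrix}\begin{pmatrix}1&0\\\tau_{2^{n-2}}&1\end{pmatrix}\begin{pmatrix}1&-\sigma_{2^{n-2}}\\0&1\end{pmatrix}\begin{pmatrix}1&0\\0&\psi_{2^{n-2}}\end{pmatrix}$; if $n\equiv1\ (4)$: $E_n=\begin{pmatrix}E_{n-1}&0\\0&E_{n-1}\end{pmatrix}\begin{pmatrix}1&0\\0&\psi_{2^{n-2}}\end{pmatrix}$; if $n\equiv2\ (4)$: $E_n=\begin{pmatrix}1&0\\0&I_{n-1}^t\end{pmatrix}\begin{pmatrix}1&0\\\tau_{2^{n-2}}&1\end{pmatrix}\begin{pmatrix}1&\psi_{2^{n-2}}\\0&1\end{pmatrix}\begin{pmatrix}1&0\\0&\sigma_{2^{n-2}}\end{pmatrix}$;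 if $n\equiv3\ (4)$: $E_n=\begin{pmatrix}E_{n-1}&0\\0&E_{n-1}\end{pmatrix}\begin{pmatrix}1&0\\0&\sigma_{2^{n-2}}\end{pmatrix}$. Let $\alpha_n=\alpha_n(x,y)$ over $Q_{2n-1}$. Define $\Psi_1:\mathbb{G}_m\to GL_2$, $t\mapsto\mathrm{diag}(t,-1)$, and for $n\ge2$ the morphism $\Psi_n:Q_{2n-1}\to GL_{2^{n-1}}$ by $\Psi_n=E_n^{-1}\alpha_n^tE_n$ if $n$ is even and $\Psi_n=E_n^t\alpha_nI_nE_n$ if $n$ is odd. *)

From HB Require Import structures.
From mathcomp Require Import all_boot all_order all_algebra.
Set Implicit Arguments. Unset Strict Implicit. Unset Printing Implicit Defensive.
Import Order.TTheory GRing.Theory Num.Theory.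
Local Open Scope ring_scope.

Lemma exp2S (m : nat) : (2 ^ m + 2 ^ m = 2 ^ m.+1)%N.
Proof. by rewrite expnS mul2n addnn. Qed.

Section Defs.
Variable R : comUnitRingType.

(* tau_N : 1 at (i, i+1) for i even; for N = 2m, the block sum of m copies
   of [[0,1],[0,0]] *)
Definition tau (N : nat) : 'M[R]_N :=
  \matrix_(i < N, j < N) (((~~ odd i) && (j == i.+1 :> nat))%:R : R).
Definition sigma (N : nat) : 'M[R]_N := tau N + (tau N)^T.
Definition psi (N : nat) : 'M[R]_N := tau N - (tau N)^T.

Definition cast2 (m : nat) (A : 'M[R]_(2 ^ m + 2 ^ m)) : 'M[R]_(2 ^ m.+1) :=
  castmx (exp2S m, exp2S m) A.

(* alphaS m a b = Suslin matrix alpha_{m+1}(a, b), a b : nat -> R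
   (a_1 is a 0, a_2 is a 1, ...) *)
Fixpoint alphaS (m : nat) (a b : nat -> R) : 'M[R]_(2 ^ m) :=
  match m with
  | 0 => (a 0%N)%:M
  | m'.+1 =>
      cast2 (block_mx (a 0%N)%:M (alphaS m' (fun i => a i.+1) (fun i => b i.+1))
                      (- (alphaS m' (fun i => b i.+1) (fun i => a i.+1))^T)
                      (b 0%N)%:M)
  end.

(* IS m = I_{m+1} *)
Fixpoint IS (m : nat) : 'M[R]_(2 ^ m) :=
  match m with
  | 0 => 1%:M
  | m'.+1 =>
      if ~~ odd m.+1 then cast2 (block_mx 0 (IS m') (- IS m') 0)
      else cast2 (block_mx (IS m') 0 0 (- IS m'))
  end.

(* ES_step q E_{q+1} = E_{q+2}; here n = q + 2, blocks have size 2^q = 2^(n-2) *)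
Definition ES_step (q : nat) (E : 'M[R]_(2 ^ q)) : 'M[R]_(2 ^ q.+1) :=
  let n := q.+2 in
  let N := (2 ^ q)%N in
  let I : 'M[R]_N := IS q in
  let one : 'M[R]_N := 1%:M in
  if (n <= 2)%N then 1%:M else
  match (n %% 4)%N with
  | 0 => cast2 (block_mx one 0 0 I^T *m block_mx one 0 (tau N) one
                *m block_mx one (- sigma N) 0 one *m block_mx one 0 0 (psi N))
  | 1 => cast2 (block_mx E 0 0 E *m block_mx one 0 0 (psi N))
  | 2 => cast2 (block_mx one 0 0 I^T *m block_mx one 0 (tau N) one
                *m block_mx one (psi N) 0 one *m block_mx one 0 0 (sigma N))
  | _ => cast2 (block_mx E 0 0 E *m block_mx one 0 0 (sigma N))
  end.

(* ES m = E_{m+1} *)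
Fixpoint ES (m : nat) : 'M[R]_(2 ^ m) :=
  match m with
  | 0 => 1%:M
  | q.+1 => ES_step (ES q)
  end.

(* Psi_n on the point (x, y) of Q_{2n-1}, n >= 2 *)
Definition Psi (n : nat) (x y : nat -> R) : 'M[R]_(2 ^ n.-1) :=
  if odd n then (ES n.-1)^T *m alphaS n.-1 x y *m IS n.-1 *m ES n.-1
  else invmx (ES n.-1) *m (alphaS n.-1 x y)^T *m ES n.-1.

Definition Psi1 (t : R) : 'M[R]_2 :=
  \matrix_(i < 2, j < 2) (if i == j then (if i == 0 :> nat then t else -1) else 0).

Definition e1 : nat -> R := fun i => (i == 0%N)%:R.
End Defs.

From Pilot Require Import Defs.
From HB Require Import structures.
From mathcomp Require Import all_boot all_order all_algebra.
From mathcomp Require Import zify.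
Set Implicit Arguments. Unset Strict Implicit. Unset Printing Implicit Defensive.
Import Order.TTheory GRing.Theory Num.Theory.
Local Open Scope ring_scope.

(* Put J_n := E_n^T I_n E_n.  The matrix I_n is orthogonal, symmetric for n = 0, 1 (mod 4)
   and antisymmetric for n = 2, 3 (mod 4).  The block factorisations of E_n, evaluated with
   tau^2 = 0 and tau tau^T + tau^T tau = 1, show by induction that J_n is sigma in the first
   case and psi in the second.  Suslin matrices satisfy alpha(a,b) alpha(b,a)^T = <a,b> Id and
   alpha I_n = I_n alpha^T for n odd, alpha(a,b) I_n = I_n alpha(b,a) for n even.  Hence for
   n odd, Psi_n^T = E^T I_n^T alpha^T E = +-E^T alpha I_n E = +-Psi_n, while for n even
   alpha^T preserves the form I_n, so its conjugate Psi_n = E^-1 alpha^T E preserves J_n.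
   At the base point alpha = Id, so Psi_n is J_n for n odd and Id for n even. *)

Section SquareCast.
Variables (R : pzRingType) (p p' : nat) (e : p = p').
Implicit Types A B : 'M[R]_p.

Lemma castmx_mulmx A B : castmx (e, e) A *m castmx (e, e) B = castmx (e, e) (A *m B).
Proof. by case: p' / e; rewrite !castmx_id. Qed.

Lemma trmx_castmx A : (castmx (e, e) A)^T = castmx (e, e) A^T.
Proof. by case: p' / e; rewrite !castmx_id. Qed.

Lemma castmx_opp A : - castmx (e, e) A = castmx (e, e) (- A).
Proof. by case: p' / e; rewrite !castmx_id. Qed.

Lemma castmx_scalar (a : R) : castmx (e, e) (a%:M : 'M_p) = a%:M.
Proof. by case: p' / e; rewrite !castmx_id. Qed.

Lemma castmx_family (F : forall k, 'M[R]_k) : F p' = castmx (e, e) (F p).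
Proof. by case: p' / e; rewrite castmx_id. Qed.

End SquareCast.

Lemma even_ltnS N i : ~~ odd N -> ~~ odd i -> (i < N)%N -> (i.+1 < N)%N.
Proof.
move=> N_even i_even iN; rewrite ltn_neqAle iN andbT; apply/eqP => Ni.
by move: N_even; rewrite -Ni /= i_even.
Qed.

Lemma odd_exp2S m : ~~ odd (2 ^ m.+1).
Proof. by rewrite expnS oddM. Qed.

Section MatrixFacts.
Variable R : comUnitRingType.

Lemma trmxN p q (A : 'M[R]_(p, q)) : (- A)^T = - A^T.
Proof. exact: linearN. Qed.

Lemma sum_indicator_eq N c (f : 'I_N.+1 -> R) :
  \sum_(k < N.+1) ((k == c :> nat)%:R * f k) = if (c < N.+1)%N then f (inord c) else 0.
Proof.
case: ltnP => cN.
  rewrite (bigD1 (inord c)) //= inordK // eqxx mul1r big1 ?addr0 // => k k_neq.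
  suff /negbTE -> : (k != c :> nat) by rewrite mul0r.
  by apply: contra k_neq => /eqP kc; apply/eqP/val_inj; rewrite /= inordK // kc.
apply: big1 => k _; suff /negbTE -> : (k != c :> nat) by rewrite mul0r.
by rewrite neq_ltn (leq_trans (ltn_ord k) cN).
Qed.

Lemma conj_mulmx p (P Q J : 'M[R]_p) :
  (P *m Q)^T *m J *m (P *m Q) = Q^T *m (P^T *m J *m P) *m Q.
Proof. by rewrite trmx_mul !mulmxA. Qed.

Lemma preserves_form_conj p (E I X : 'M[R]_p) : E \in unitmx -> X^T *m I *m X = I ->
  (invmx E *m X *m E)^T *m (E^T *m I *m E) *m (invmx E *m X *m E) = E^T *m I *m E.
Proof.
move=> E_unit XI.
have cancel_invT Y : Y *m (invmx E)^T *m E^T = Y.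
  by rewrite -mulmxA -trmx_mul mulmxV // trmx1 mulmx1.
have cancel_inv Y : Y *m E *m invmx E = Y by rewrite -mulmxA mulmxV // mulmx1.
by rewrite !trmx_mul !mulmxA cancel_invT cancel_inv -(mulmxA _ X^T) -(mulmxA _ (X^T *m I)) XI.
Qed.

End MatrixFacts.

Section Psi.
Variable R : comUnitRingType.
Local Notation tau := (tau R).
Local Notation sigma := (sigma R).
Local Notation psi := (psi R).
Local Notation IS := (@IS R).
Local Notation ES := (@ES R).
Local Notation alpha := (@alphaS R).

Section Cast2.
Variable m : nat.
Implicit Types A B : 'M[R]_(2 ^ m + 2 ^ m).

Lemma cast2M A B : cast2 A *m cast2 B = cast2 (A *m B).
Proof. exact: castmx_mulmx. Qed.

Lemma cast2T A : (cast2 A)^T = cast2 A^T.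
Proof. exact: trmx_castmx. Qed.

Lemma cast2N A : - cast2 A = cast2 (- A).
Proof. exact: castmx_opp. Qed.

Lemma cast2C (a : R) : cast2 (a%:M : 'M_(2 ^ m + 2 ^ m)) = a%:M.
Proof. exact: castmx_scalar. Qed.

Lemma cast2_conj A B : (cast2 A)^T *m cast2 B *m cast2 A = cast2 (A^T *m B *m A).
Proof. by rewrite cast2T !cast2M. Qed.

End Cast2.

Lemma tauE N (i j : 'I_N) : tau N i j = ((~~ odd i) && (j == i.+1 :> nat))%:R.
Proof. by rewrite mxE. Qed.

Lemma tau_sq N : tau N *m tau N = 0.
Proof.
apply/matrixP => i j; rewrite !mxE; apply: big1 => k _; rewrite !tauE.
case: (boolP (k == i.+1 :> nat)) => [/eqP ->|_]; last by rewrite andbF mul0r.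
by rewrite /= negbK; case: (odd i); rewrite ?mul0r ?mulr0.
Qed.

Lemma tauT_sq N : (tau N)^T *m (tau N)^T = 0.
Proof. by rewrite -trmx_mul tau_sq trmx0. Qed.

Lemma tau_trmx_mul N : ~~ odd N ->
  tau N *m (tau N)^T = \matrix_(i, j) ((~~ odd i) && (i == j))%:R.
Proof.
case: N => [|N] N_even; apply/matrixP => i j; first by case: i.
rewrite !mxE.
transitivity (\sum_(k < N.+1) ((k == i.+1 :> nat)%:R *
   (((~~ odd i) && (~~ odd j) && (i.+1 == j.+1)))%:R : R)).
  apply: eq_bigr => k _; rewrite !mxE.
  case: (boolP (k == i.+1 :> nat)) => [/eqP ->|_]; last by rewrite !andbF !mul0r.
  by rewrite !andbT; case: (~~ odd i); case: (~~ odd j); rewrite ?mul1r ?mul0r ?mulr0 // eq_sym.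
rewrite sum_indicator_eq; case: (boolP (~~ odd i)) => [i_even|]; last by case: ifP.
rewrite even_ltnS //= eqSS; case: (boolP (i == j :> nat)) => [/eqP ij|ij].
  by rewrite -ij i_even (_ : i == j) //; apply/eqP/val_inj.
by rewrite andbF (negbTE (ij : i != j)).
Qed.

Lemma trmx_tau_mul N : (tau N)^T *m tau N = \matrix_(i, j) ((odd i) && (i == j))%:R.
Proof.
case: N => [|N]; apply/matrixP => i j; first by case: i.
rewrite !mxE.
transitivity (\sum_(k < N.+1) ((k == i.-1 :> nat)%:R *
   (((odd i) && (j == i :> nat)))%:R : R)).
  apply: eq_bigr => k _; rewrite !mxE.
  case: (boolP (i == k.+1 :> nat)) => [/eqP ik|ik].
    by rewrite ik /= eqxx mul1r; case: (odd k); rewrite ?mul0r //= mul1r -ik.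
  rewrite andbF mul0r; case: (boolP (k == i.-1 :> nat)) => [/eqP ki|]; last by rewrite mul0r.
  by case: (nat_of_ord i) ik ki => [|i'] /= ik ki; [rewrite mulr0 | rewrite ki eqxx in ik].
rewrite sum_indicator_eq (leq_ltn_trans (leq_pred i) (ltn_ord i)).
by rewrite (eq_sym (j : nat)).
Qed.

Lemma tau_trmx_add N : ~~ odd N -> tau N *m (tau N)^T + (tau N)^T *m tau N = 1%:M.
Proof.
move=> N_even; rewrite tau_trmx_mul // trmx_tau_mul; apply/matrixP => i j; rewrite !mxE.
by case: (odd (nat_of_ord i)); case: (i == j); rewrite ?addr0 ?add0r.
Qed.

Lemma trmx_sigma N : (sigma N)^T = sigma N.
Proof. by rewrite /Defs.sigma linearD /= trmxK addrC. Qed.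

Lemma trmx_psi N : (psi N)^T = - psi N.
Proof. by rewrite /Defs.psi linearB /= trmxK opprB. Qed.

Lemma sigma_sq N : ~~ odd N -> sigma N *m sigma N = 1%:M.
Proof.
move=> N_even; rewrite /Defs.sigma mulmxDl !mulmxDr tau_sq tauT_sq add0r addr0.
exact: tau_trmx_add.
Qed.

Lemma psi_sq N : ~~ odd N -> psi N *m psi N = - 1%:M.
Proof.
move=> N_even; rewrite /Defs.psi mulmxBl !mulmxBr tau_sq tauT_sq -(tau_trmx_add N_even).
by rewrite sub0r subr0 opprD.
Qed.

Lemma sigma_psi_anticomm N : sigma N *m psi N = - (psi N *m sigma N).
Proof.
rewrite /Defs.sigma /Defs.psi mulmxBr !mulmxDl !mulmxDr !mulNmx tau_sq tauT_sq.
by rewrite !add0r !addr0 oppr0 addr0 opprD opprK addrC.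
Qed.

Lemma psi_sigma_psi N : ~~ odd N -> psi N *m sigma N *m psi N = sigma N.
Proof.
move=> N_even; rewrite -[psi N *m _]opprK -sigma_psi_anticomm mulNmx -mulmxA.
by rewrite psi_sq // mulmxN mulmx1 opprK.
Qed.

Lemma sigma_psi_sigma N : ~~ odd N -> sigma N *m psi N *m sigma N = - psi N.
Proof. by move=> N_even; rewrite sigma_psi_anticomm mulNmx -mulmxA sigma_sq // mulmx1. Qed.

Lemma sigma_unitmx N : ~~ odd N -> sigma N \in unitmx.
Proof. by move=> N_even; case: (mulmx1_unit (sigma_sq N_even)). Qed.

Lemma psi_unitmx N : ~~ odd N -> psi N \in unitmx.
Proof.
move=> N_even; have psi_inv : psi N *m (- psi N) = 1%:M by rewrite mulmxN psi_sq // opprK.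
by case: (mulmx1_unit psi_inv).
Qed.

Lemma tau_block N : ~~ odd N -> tau (N + N) = block_mx (tau N) 0 0 (tau N).
Proof.
move=> N_even; apply/matrixP => i j; rewrite block_mxEv !mxE.
case: (splitP i) => i' ->; rewrite !mxE; case: (splitP j) => j' ->; rewrite !mxE //.
- case: (boolP (~~ odd i')) => i'_even; last by rewrite andFb.
  have := even_ltnS N_even i'_even (ltn_ord i'); have := ltn_ord j'.
  by case: eqP => //; lia.
- by have := ltn_ord j'; case: eqP; rewrite ?andbF //; lia.
- by rewrite oddD (negbTE N_even) /= -addnS eqn_add2l.
Qed.

Lemma sigma_block N : ~~ odd N -> sigma (N + N) = block_mx (sigma N) 0 0 (sigma N).
Proof.
by move=> N_even; rewrite /Defs.sigma tau_block // tr_block_mx !trmx0 add_block_mx !addr0.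
Qed.

Lemma psi_block N : ~~ odd N -> psi (N + N) = block_mx (psi N) 0 0 (psi N).
Proof.
move=> N_even; rewrite /Defs.psi tau_block // tr_block_mx !trmx0 opp_block_mx.
by rewrite add_block_mx !oppr0 !addr0.
Qed.

Lemma sigma_cast m :
  sigma (2 ^ m.+2) = cast2 (block_mx (sigma (2 ^ m.+1)) 0 0 (sigma (2 ^ m.+1))).
Proof. by rewrite (castmx_family (exp2S m.+1) sigma) sigma_block // odd_exp2S. Qed.

Lemma psi_cast m :
  psi (2 ^ m.+2) = cast2 (block_mx (psi (2 ^ m.+1)) 0 0 (psi (2 ^ m.+1))).
Proof. by rewrite (castmx_family (exp2S m.+1) psi) psi_block // odd_exp2S. Qed.

(* I_n is antisymmetric iff [I_skew n]; note that [IS m] is I_{m+1}. *)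
Definition I_skew (n : nat) : bool := (2 <= n %% 4)%N.

Lemma I_skewSS m : I_skew m.+2 = (odd m == I_skew m.+1).
Proof. by rewrite /I_skew; have := modn2 m; case: (odd m) => /= m2; lia. Qed.

Lemma IS_S m : IS m.+1 = if odd m then cast2 (block_mx (IS m) 0 0 (- IS m))
                         else cast2 (block_mx 0 (IS m) (- IS m) 0).
Proof. by rewrite /=; case: (odd m). Qed.

Lemma trmx_IS m : (IS m)^T = if I_skew m.+1 then - IS m else IS m.
Proof.
elim: m => [|m IH]; first by rewrite /= tr_scalar_mx.
rewrite IS_S I_skewSS; case: (odd m); case: (I_skew m.+1) IH => IH;
  by rewrite /= cast2T tr_block_mx !trmx0 ?trmxN IH ?opprK ?cast2N ?opp_block_mx ?oppr0 ?opprK.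
Qed.

Lemma IS_mul_trmx m : IS m *m (IS m)^T = 1%:M.
Proof.
elim: m => [|m IH]; first by rewrite /= tr_scalar_mx mul1mx.
rewrite IS_S; case: (odd m); rewrite cast2T cast2M tr_block_mx !trmx0 mulmx_block;
  rewrite ?trmxN ?mulmx0 ?mul0mx ?mulmxN ?mulNmx ?opprK ?IH ?addr0 ?add0r ?oppr0;
  by rewrite -scalar_mx_block cast2C.
Qed.

Lemma trmx_IS_mul m : (IS m)^T *m IS m = 1%:M.
Proof. exact/mulmx1C/IS_mul_trmx. Qed.

Lemma IS_sq m : IS m *m IS m = if I_skew m.+1 then - 1%:M else 1%:M.
Proof.
have := IS_mul_trmx m; rewrite trmx_IS; case: (I_skew m.+1) => //.
by rewrite mulmxN => <-; rewrite opprK.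
Qed.

Lemma IS_unitmx m : IS m \in unitmx.
Proof. by case: (mulmx1_unit (IS_mul_trmx m)). Qed.

Lemma IS1 : IS 1 = psi (2 ^ 1).
Proof.
rewrite (castmx_family (exp2S 0) psi) /=; congr castmx.
apply/matrixP => i j; rewrite block_mxEv !mxE.
case: (splitP i) => i' ->; rewrite !mxE; case: (splitP j) => j' ->; rewrite !mxE;
  by rewrite ?ord1 //= ?subr0 ?sub0r ?oppr0.
Qed.

Lemma alphaS_S m a b : alpha m.+1 a b =
  cast2 (block_mx (a 0%N)%:M (alpha m (fun i => a i.+1) (fun i => b i.+1))
         (- (alpha m (fun i => b i.+1) (fun i => a i.+1))^T) (b 0%N)%:M).
Proof. by []. Qed.

Lemma alphaS_mul_trmx m a b :
  alpha m a b *m (alpha m b a)^T = (\sum_(i < m.+1) a i * b i)%:M /\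
  (alpha m b a)^T *m alpha m a b = (\sum_(i < m.+1) a i * b i)%:M.
Proof.
elim: m a b => [|m IH] a b.
  by rewrite /= tr_scalar_mx big_ord1 -!scalar_mxM mulrC.
rewrite !alphaS_S cast2T !cast2M tr_block_mx !mulmx_block big_ord_recl.
set A := alpha m _ _; set B := alpha m _ _.
have [AB BA] := IH (fun i => a i.+1) (fun i => b i.+1); rewrite -/A -/B in AB BA.
rewrite !tr_scalar_mx trmxN trmxK.
rewrite !mul_scalar_mx !mul_mx_scalar !mulmxN !mulNmx !opprK AB BA !scalerN.
rewrite !addNr !addrN !scale_scalar_mx -!raddfD /= (mulrC (b 0%N)) (addrC (_ * _)).
by split; rewrite -scalar_mx_block cast2C.
Qed.

Section IntertwineIS.
Variable m : nat.
Implicit Types X Y : 'M[R]_(2 ^ m).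

Lemma intertwine_trmx_IS X Y : X *m (IS m)^T = (IS m)^T *m Y -> X *m IS m = IS m *m Y.
Proof. by rewrite trmx_IS; case: (I_skew m.+1) => //; rewrite mulmxN mulNmx => /oppr_inj. Qed.

Lemma intertwine_IS_sym X Y : X *m IS m = IS m *m Y -> IS m *m X = Y *m IS m.
Proof.
move=> XY; symmetry; apply: intertwine_trmx_IS.
have : (IS m)^T *m (X *m IS m) *m (IS m)^T = (IS m)^T *m (IS m *m Y) *m (IS m)^T.
  by rewrite XY.
by rewrite -!mulmxA IS_mul_trmx mulmx1 !mulmxA trmx_IS_mul mul1mx => ->.
Qed.

Lemma intertwine_IS_trmx X Y : X *m IS m = IS m *m Y -> Y^T *m IS m = IS m *m X^T.
Proof. by move=> XY; apply: intertwine_trmx_IS; rewrite -!trmx_mul XY. Qed.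

End IntertwineIS.

Lemma alphaS_IS m a b :
  alpha m a b *m IS m = IS m *m (if odd m then alpha m b a else (alpha m a b)^T).
Proof.
elim: m a b => [|m IH] a b; first by rewrite /= tr_scalar_mx mulmx1 mul1mx.
have IHab := IH (fun i => a i.+1) (fun i => b i.+1).
have IHba := IH (fun i => b i.+1) (fun i => a i.+1).
rewrite [odd _]/= !alphaS_S IS_S; case: (boolP (odd m)) => m_odd /= in IHab IHba *.
  rewrite cast2T !cast2M tr_block_mx !mulmx_block trmxN trmxK !tr_scalar_mx.
  rewrite !mulmx0 !mul0mx !mulmxN !mulNmx !addr0 !add0r !mul_scalar_mx !mul_mx_scalar.
  by rewrite IHab (intertwine_IS_trmx IHab).
rewrite !cast2M !mulmx_block !mulmx0 !mul0mx !mulmxN !mulNmx !addr0 !add0r.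
by rewrite !mul_scalar_mx !mul_mx_scalar IHab (intertwine_IS_sym IHba).
Qed.

Lemma alphaS_eq0 m a b : (forall i, a i = 0) -> (forall i, b i = 0) -> alpha m a b = 0.
Proof.
elim: m a b => [|m IH] a b a0 b0; first by rewrite /= a0 raddf0.
by rewrite alphaS_S !IH // a0 b0 trmx0 oppr0 -scalar_mx_block cast2C raddf0.
Qed.

Lemma alphaS_e1 m : alpha m (e1 R) (e1 R) = 1%:M.
Proof.
case: m => [|m] //; rewrite alphaS_S alphaS_eq0 // trmx0 oppr0 -scalar_mx_block.
by rewrite /e1 /= cast2C.
Qed.

Ltac block_simpl := rewrite ?tr_block_mx ?trmx0 ?trmx1 ?trmxN ?trmxK ?tr_scalar_mx;
  rewrite ?mulmx_block;
  do 3 rewrite ?mulmx0 ?mul0mx ?mulmx1 ?mul1mx ?addr0 ?add0r ?mulmxN ?mulNmx ?opprK ?oppr0.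

Lemma ES_form_base : (ES 1)^T *m IS 1 *m ES 1 = psi (2 ^ 1).
Proof. by rewrite IS1 /= trmx1 mul1mx mulmx1. Qed.

Section ESFormStep.
(* With n = m + 3, [ES m.+2] is E_n and [IS m.+1] is I_{n-1}. *)
Variable m : nat.
Local Notation N := (2 ^ m.+1)%N.
Local Notation I := (IS m.+1).

Lemma ES_form_mod0 : (m.+3 %% 4 = 0)%N ->
  (ES m.+2)^T *m IS m.+2 *m ES m.+2 = sigma (2 ^ m.+2).
Proof.
move=> n_mod4; rewrite -[ES m.+2]/(ES_step (ES m.+1)) /ES_step n_mod4.
rewrite (_ : (m.+2 < 2)%N = false) //.
have m1_even : odd m.+1 = false by have := modn2 m.+1; case: odd => // /=; lia.
have I_skew_m2 : I_skew m.+2 by rewrite /I_skew; lia.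
have := trmx_IS m.+1; have := IS_sq m.+1; rewrite I_skew_m2 => I_sq I_tr.
rewrite (IS_S m.+1) m1_even cast2_conj !conj_mulmx sigma_cast; congr cast2.
have -> : (block_mx 1%:M 0 0 I^T)^T *m block_mx 0 I (- I) 0 *m block_mx 1%:M 0 0 I^T
          = block_mx 0 1%:M 1%:M 0 :> 'M_(N + N).
  by block_simpl; rewrite I_tr mulmxN I_sq opprK.
have -> : (block_mx 1%:M 0 (tau N) 1%:M)^T *m block_mx 0 1%:M 1%:M 0 *m
          block_mx 1%:M 0 (tau N) 1%:M = block_mx (sigma N) 1%:M 1%:M 0 :> 'M_(N + N).
  by block_simpl; rewrite /Defs.sigma addrC.
have -> : (block_mx 1%:M (- sigma N) 0 1%:M)^T *m block_mx (sigma N) 1%:M 1%:M 0 *m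
          block_mx 1%:M (- sigma N) 0 1%:M = block_mx (sigma N) 0 0 (- sigma N) :> 'M_(N + N).
  by block_simpl; rewrite trmx_sigma sigma_sq ?odd_exp2S // addNr mul0mx oppr0 sub0r.
by block_simpl; rewrite trmx_psi !mulNmx opprK psi_sigma_psi ?odd_exp2S.
Qed.

Lemma ES_form_mod2 : (m.+3 %% 4 = 2)%N ->
  (ES m.+2)^T *m IS m.+2 *m ES m.+2 = psi (2 ^ m.+2).
Proof.
move=> n_mod4; rewrite -[ES m.+2]/(ES_step (ES m.+1)) /ES_step n_mod4.
rewrite (_ : (m.+2 < 2)%N = false) //.
have m1_even : odd m.+1 = false by have := modn2 m.+1; case: odd => // /=; lia.
have I_sym : I_skew m.+2 = false by rewrite /I_skew; lia.
have := trmx_IS m.+1; have := IS_sq m.+1; rewrite I_sym => I_sq I_tr.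
rewrite (IS_S m.+1) m1_even cast2_conj !conj_mulmx psi_cast; congr cast2.
have -> : (block_mx 1%:M 0 0 I^T)^T *m block_mx 0 I (- I) 0 *m block_mx 1%:M 0 0 I^T
          = block_mx 0 1%:M (- 1%:M) 0 :> 'M_(N + N).
  by block_simpl; rewrite I_tr I_sq.
have -> : (block_mx 1%:M 0 (tau N) 1%:M)^T *m block_mx 0 1%:M (- 1%:M) 0 *m
          block_mx 1%:M 0 (tau N) 1%:M = block_mx (psi N) 1%:M (- 1%:M) 0 :> 'M_(N + N).
  by block_simpl; rewrite /Defs.psi addrC.
have -> : (block_mx 1%:M (psi N) 0 1%:M)^T *m block_mx (psi N) 1%:M (- 1%:M) 0 *m
          block_mx 1%:M (psi N) 0 1%:M = block_mx (psi N) 0 0 (- psi N) :> 'M_(N + N).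
  by block_simpl; rewrite trmx_psi mulNmx psi_sq ?odd_exp2S // opprK addNr subrr mul0mx add0r.
by block_simpl; rewrite trmx_sigma sigma_psi_sigma ?odd_exp2S // opprK.
Qed.

Lemma ES_form_mod1 : (m.+3 %% 4 = 1)%N ->
  (ES m.+1)^T *m I *m ES m.+1 = sigma N ->
  (ES m.+2)^T *m IS m.+2 *m ES m.+2 = sigma (2 ^ m.+2).
Proof.
move=> n_mod4 ES_form_m; rewrite -[ES m.+2]/(ES_step (ES m.+1)) /ES_step n_mod4.
rewrite (_ : (m.+2 < 2)%N = false) //.
have m1_odd : odd m.+1 by have := modn2 m.+1; case: odd => // /=; lia.
rewrite (IS_S m.+1) m1_odd cast2_conj !conj_mulmx sigma_cast; congr cast2.
by block_simpl; rewrite ES_form_m trmx_psi !mulNmx opprK psi_sigma_psi ?odd_exp2S.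
Qed.

Lemma ES_form_mod3 : (m.+3 %% 4 = 3)%N ->
  (ES m.+1)^T *m I *m ES m.+1 = psi N ->
  (ES m.+2)^T *m IS m.+2 *m ES m.+2 = psi (2 ^ m.+2).
Proof.
move=> n_mod4 ES_form_m; rewrite -[ES m.+2]/(ES_step (ES m.+1)) /ES_step n_mod4.
rewrite (_ : (m.+2 < 2)%N = false) //.
have m1_odd : odd m.+1 by have := modn2 m.+1; case: odd => // /=; lia.
rewrite (IS_S m.+1) m1_odd cast2_conj !conj_mulmx psi_cast; congr cast2.
by block_simpl; rewrite ES_form_m trmx_sigma sigma_psi_sigma ?odd_exp2S // opprK.
Qed.

End ESFormStep.

Lemma ES_form m : (ES m.+1)^T *m IS m.+1 *m ES m.+1 =
  if I_skew m.+2 then psi (2 ^ m.+1) else sigma (2 ^ m.+1).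
Proof.
elim: m => [|m IH]; first exact: ES_form_base.
rewrite /I_skew in IH *.
case n_mod4: (m.+3 %% 4)%N => [|[|[|[|r]]]] /=.
- exact: ES_form_mod0.
- by apply: ES_form_mod1 => //; rewrite IH (_ : (m.+2 %% 4)%N = 0%N) //; lia.
- exact: ES_form_mod2.
- by apply: ES_form_mod3 => //; rewrite IH (_ : (m.+2 %% 4)%N = 2%N) //; lia.
- by have := ltn_pmod m.+3 (isT : (0 < 4)%N); rewrite n_mod4.
Qed.

Lemma ES_unitmx m : ES m.+1 \in unitmx.
Proof.
have : (ES m.+1)^T *m IS m.+1 *m ES m.+1 \in unitmx.
  by rewrite ES_form; case: ifP => _;
    [exact: psi_unitmx (odd_exp2S m) | exact: sigma_unitmx (odd_exp2S m)].
by rewrite !unitmx_mul => /andP [_ ->].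
Qed.

Lemma PsiE m (x y : nat -> R) : Psi m.+2 x y = if odd m
  then (ES m.+1)^T *m alpha m.+1 x y *m IS m.+1 *m ES m.+1
  else invmx (ES m.+1) *m (alpha m.+1 x y)^T *m ES m.+1.
Proof. by rewrite /Psi [odd m.+2]/= negbK. Qed.

Lemma Psi_unitmx m (x y : nat -> R) : \sum_(i < m.+2) x i * y i = 1 -> Psi m.+2 x y \in unitmx.
Proof.
move=> xy1; have [alpha_inv _] := alphaS_mul_trmx m.+1 x y; rewrite xy1 in alpha_inv.
have [alpha_unit _] := mulmx1_unit alpha_inv.
rewrite PsiE; case: ifP => _;
  by rewrite !unitmx_mul ?unitmx_inv ?unitmx_tr ES_unitmx alpha_unit ?IS_unitmx.
Qed.

Lemma trmx_Psi_odd m (x y : nat -> R) : odd m ->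
  (Psi m.+2 x y)^T = if I_skew m.+2 then - Psi m.+2 x y else Psi m.+2 x y.
Proof.
move=> m_odd.
have alpha_IS : (ES m.+1)^T *m IS m.+1 *m (alpha m.+1 x y)^T =
                (ES m.+1)^T *m alpha m.+1 x y *m IS m.+1.
  by rewrite -!mulmxA alphaS_IS [odd _]/= m_odd.
rewrite PsiE m_odd !trmx_mul trmxK trmx_IS.
by case: ifP => _; rewrite ?mulNmx ?mulmxN !mulmxA alpha_IS.
Qed.

Lemma Psi_preserves_form m (x y : nat -> R) :
  ~~ odd m -> \sum_(i < m.+2) x i * y i = 1 ->
  (Psi m.+2 x y)^T *m ((ES m.+1)^T *m IS m.+1 *m ES m.+1) *m Psi m.+2 x y
  = (ES m.+1)^T *m IS m.+1 *m ES m.+1.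
Proof.
move=> m_even xy1; rewrite PsiE (negbTE m_even); apply: preserves_form_conj (ES_unitmx m) _.
rewrite trmxK alphaS_IS [odd _]/= m_even.
have [alpha_inv _] := alphaS_mul_trmx m.+1 y x.
have yx1 : \sum_(i < m.+2) y i * x i = 1 by rewrite -xy1; apply: eq_bigr => i _; exact: mulrC.
by rewrite -mulmxA alpha_inv yx1 mulmx1.
Qed.

Lemma Psi_e1 m : Psi m.+2 (e1 R) (e1 R) =
  if odd m then (ES m.+1)^T *m IS m.+1 *m ES m.+1 else 1%:M.
Proof.
by rewrite PsiE alphaS_e1 trmx1 mulmx1; case: ifP => _; rewrite ?mulmx1 ?mulVmx ?ES_unitmx.
Qed.

Lemma Psi1_diag (t : R) : Psi1 t = diag_mx (\row_(i < 2) (if i == 0 :> nat then t else -1)).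
Proof.
by apply/matrixP => i j; rewrite !mxE; case: eqP => [->|]; rewrite ?eqxx ?mulr1n ?mulr0n.
Qed.

Lemma trmx_Psi1 (t : R) : (Psi1 t)^T = Psi1 t.
Proof. by rewrite Psi1_diag tr_diag_mx. Qed.

Lemma Psi1_unitmx (t : R) : t \is a GRing.unit -> Psi1 t \in unitmx.
Proof.
move=> t_unit; rewrite Psi1_diag unitmxE det_diag !big_ord_recr big_ord0 !mxE /= mul1r.
by rewrite unitrM t_unit unitrN unitr1.
Qed.

End Psi.

Theorem proposition3p6 (k : fieldType) (hk : (2%:R : k) != 0) (R : comUnitAlgType k) :
  (forall t : R, t \is a GRing.unit ->
     (Psi1 t)^T = Psi1 t /\ Psi1 t \in unitmx) /\
  (forall n : nat, (2 <= n)%N ->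
     (forall x y : nat -> R, \sum_(i < n) x i * y i = 1 ->
        Psi n x y \in unitmx /\
        ((n %% 4 = 0)%N -> (Psi n x y)^T *m sigma R (2 ^ n.-1) *m Psi n x y
                            = sigma R (2 ^ n.-1)) /\
        ((n %% 4 = 1)%N -> (Psi n x y)^T = Psi n x y) /\
        ((n %% 4 = 2)%N -> (Psi n x y)^T *m psi R (2 ^ n.-1) *m Psi n x y
                            = psi R (2 ^ n.-1)) /\
        ((n %% 4 = 3)%N -> (Psi n x y)^T = - Psi n x y)) /\
     ((n %% 4 = 0)%N -> Psi n (e1 R) (e1 R) = 1%:M) /\
     ((n %% 4 = 1)%N -> Psi n (e1 R) (e1 R) = sigma R (2 ^ n.-1)) /\
     ((n %% 4 = 2)%N -> Psi n (e1 R) (e1 R) = 1%:M) /\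
     ((n %% 4 = 3)%N -> Psi n (e1 R) (e1 R) = psi R (2 ^ n.-1))).
Proof.
split=> [t t_unit | [|[|m]] // _]; first by rewrite trmx_Psi1 Psi1_unitmx.
have residue r : (m.+2 %% 4 = r)%N -> odd m = odd r /\ I_skew m.+2 = (2 <= r)%N.
  by move=> n_mod4; rewrite /I_skew -n_mod4 odd_mod //= negbK.
rewrite [m.+2.-1]/=; split.
  move=> x y xy1; split; first exact: Psi_unitmx.
  have form m_even := Psi_preserves_form m_even xy1; rewrite ES_form in form.
  split=> [/residue[/negbT m_even skew] | ]; first by have := form m_even; rewrite skew.
  split=> [/residue[m_odd skew] | ]; first by rewrite trmx_Psi_odd ?m_odd ?skew.
  split=> [/residue[/negbT m_even skew] | /residue[m_odd skew]].
    by have := form m_even; rewrite skew.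
  by rewrite trmx_Psi_odd ?m_odd ?skew.
split=> [/residue[/= m_par skew] | ]; first by rewrite Psi_e1 m_par.
split=> [/residue[/= m_par skew] | ]; first by rewrite Psi_e1 m_par ES_form skew.
split=> [/residue[/= m_par skew] | /residue[/= m_par skew]]; first by rewrite Psi_e1 m_par.
by rewrite Psi_e1 m_par ES_form skew.
Qed.
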